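(* Let $\varphi$ be an LDL$_F$ formula over a set of Boolean variables $X\cup Y$ ($X\cap Y=\emptyset$), and let $p,q$ be fresh Boolean variables. Let $\mathcal{G}_\varphi$ be the four-player iterated Boolean game with QPLDL$_F$ goals over $X\cup Y\cup\{p,q\}$ where Player 1 controls $X$ with goal $\gamma_1=\exists\varphi$; Player 2 controls $Y$ with goal $\gamma_2=\forall\neg\varphi$; Player 3 controls $p$ with goal $\gamma_3=\exists\varphi\vee(p\leftrightarrow q)$; Player 4 controls $q$ with goal $\gamma_4=\exists\varphi\vee\neg(p\leftrightarrow q)$. Then the synthesis problem for $\varphi$ in which the system controls $X$ and the environment controls $Y$ has a positive answer if and only if $\mathcal{G}_\varphi$ has a Nash equilibrium.
   Context: LDL$_F$ formulas over a finite set $\Phi$ of Boolean variables: $\varphi ::= p \mid \neg\varphi \mid \varphi\wedge\varphi \mid \varphi\vee\varphi \mid \langle\rho\rangle\varphi \mid [\rho]\varphi$, $\rho ::= \psi \mid \varphi? \mid \rho+\rho \mid \rho;\rho \mid \rho^*$ ($\psi$ propositional), with standard semantics over finite traces. For $\pi^\infty\in(2^\Phi)^\omega$: $\pi^\infty\models\exists\psi$ iff some finite prefix of $\pi^\infty$ satisfies $\psi$; $\pi^\infty\models\forall\psi$ iff every finite prefix satisfies $\psi$. In $\gamma_3,\gamma_4$ the disjunct $p\leftrightarrow q$ (resp. $\neg(p\leftrightarrow q)$) is evaluated on the play as an LDL$_F$ formula, i.e. it holds iff it holds in the first valuation of the play. Iterated Boolean game: players $N=\{1,\dots,n\}$, each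 controlling a part $\Phi_i$ of a partition of $\Phi$; strategies are finite state machines $\sigma_i=(S_i,s_i^0,\delta_i:S_i\times2^\Phi\to S_i,\tau_i:S_i\to2^{\Phi_i})$; a profile generates the play $\pi^\infty(\vec\sigma)=v_0v_1\cdots$, $v_t=\bigcup_i\tau_i(s_i^t)$, $s_i^{t+1}=\delta_i(s_i^t,v_t)$; $\vec\sigma$ is a Nash equilibrium if no player $i$ has a strategy $\sigma'_i$ with $\pi^\infty(\vec\sigma_{-i},\sigma'_i)\models\gamma_i$ and $\pi^\infty(\vec\sigma)\not\models\gamma_i$. The synthesis problem for $\varphi$ (system controls $X$, environment controls $Y$, both choosing their valuations simultaneously at each round) has a positive answer iff there is a finite-state strategy of the system (controlling $X$) such that for every finite-state strategy of the environment (controlling $Y$) the resulting infinite play has a finite prefix satisfying $\varphi$. *)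

From HB Require Import structures.
From mathcomp Require Import all_boot.
From Stdlib Require Import Relations.
Set Implicit Arguments. Unset Strict Implicit. Unset Printing Implicit Defensive.

Inductive pform (V : Type) : Type :=
| PVar : V -> pform V
| PNot : pform V -> pform V
| PAnd : pform V -> pform V -> pform V
| POr  : pform V -> pform V -> pform V.

Inductive ldl (V : Type) : Type :=
| LVar : V -> ldl V
| LNot : ldl V -> ldl V
| LAnd : ldl V -> ldl V -> ldl V
| LOr  : ldl V -> ldl V -> ldl V
| LDia : rexp V -> ldl V -> ldl V
| LBox : rexp V -> ldl V -> ldl V
with rexp (V : Type) : Type :=
| RProp : pform V -> rexp V
| RTest : ldl V -> rexp V
| RPlus : rexp V -> rexp V -> rexp V
| RSeq  : rexp V -> rexp V -> rexp V
| RStar : rexp V -> rexp V.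

Fixpoint pmap V W (f : V -> W) (p : pform V) : pform W :=
  match p with
  | PVar x => PVar (f x)
  | PNot a => PNot (pmap f a)
  | PAnd a b => PAnd (pmap f a) (pmap f b)
  | POr a b => POr (pmap f a) (pmap f b)
  end.

Fixpoint lmap V W (f : V -> W) (g : ldl V) {struct g} : ldl W :=
  match g with
  | LVar x => LVar (f x)
  | LNot a => LNot (lmap f a)
  | LAnd a b => LAnd (lmap f a) (lmap f b)
  | LOr a b => LOr (lmap f a) (lmap f b)
  | LDia r a => LDia (rmap f r) (lmap f a)
  | LBox r a => LBox (rmap f r) (lmap f a)
  end
with rmap V W (f : V -> W) (r : rexp V) {struct r} : rexp W :=
  match r with
  | RProp p => RProp (pmap f p)
  | RTest a => RTest (lmap f a)
  | RPlus r1 r2 => RPlus (rmap f r1) (rmap f r2)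
  | RSeq r1 r2 => RSeq (rmap f r1) (rmap f r2)
  | RStar r1 => RStar (rmap f r1)
  end.

Fixpoint peval (V : finType) (v : {set V}) (p : pform V) : bool :=
  match p with
  | PVar x => x \in v
  | PNot a => ~~ peval v a
  | PAnd a b => peval v a && peval v b
  | POr a b => peval v a || peval v b
  end.

(* Standard semantics (De Giacomo & Vardi): positions 0..last, last = size tr - 1;
   atoms are false beyond last; psi-steps go from i to i+1 for i <= last. *)
Fixpoint sat (V : finType) (tr : seq {set V}) (g : ldl V) (i : nat) {struct g} : Prop :=
  match g with
  | LVar x => i < size tr /\ x \in nth set0 tr i
  | LNot a => ~ sat tr a i
  | LAnd a b => sat tr a i /\ sat tr b i
  | LOr a b => sat tr a i \/ sat tr b i
  | LDia r a => exists j, reach tr r i j /\ sat tr a j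
  | LBox r a => forall j, reach tr r i j -> sat tr a j
  end
with reach (V : finType) (tr : seq {set V}) (r : rexp V) (i j : nat) {struct r} : Prop :=
  match r with
  | RProp p => j = i.+1 /\ i < size tr /\ peval (nth set0 tr i) p
  | RTest a => j = i /\ sat tr a i
  | RPlus r1 r2 => reach tr r1 i j \/ reach tr r2 i j
  | RSeq r1 r2 => exists k, reach tr r1 i k /\ reach tr r2 k j
  | RStar r1 => clos_refl_trans nat (fun a b => reach tr r1 a b) i j
  end.

Definition models (V : finType) (tr : seq {set V}) (g : ldl V) : Prop := sat tr g 0.

Inductive goal (V : Type) : Type :=
| GEx : ldl V -> goal V
| GAll : ldl V -> goal V
| GFirst : pform V -> goal V
| GNot : goal V -> goal V
| GAnd : goal V -> goal V -> goal V
| GOr : goal V -> goal V -> goal V.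

(* finite prefixes of a play are taken to be the nonempty ones, of length k+1 *)
Definition prefix (V : finType) (pl : nat -> {set V}) (k : nat) : seq {set V} :=
  mkseq pl k.+1.

Fixpoint gsat (V : finType) (pl : nat -> {set V}) (g : goal V) : Prop :=
  match g with
  | GEx f => exists k, models (prefix pl k) f
  | GAll f => forall k, models (prefix pl k) f
  | GFirst p => peval (pl 0) p
  | GNot a => ~ gsat pl a
  | GAnd a b => gsat pl a /\ gsat pl b
  | GOr a b => gsat pl a \/ gsat pl b
  end.

Record fsm (V : finType) := FSM {
  fstate : finType;
  finit : fstate;
  fdelta : fstate -> {set V} -> fstate;
  ftau : fstate -> {set V} }.

Definition fsm_for (V : finType) (C : {set V}) (s : fsm V) : Prop :=
  forall x : fstate s, ftau x \subset C.

Definition controlled (N V : finType) (own : V -> N) (i : N) : {set V} :=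
  [set x | own x == i].

Fixpoint states (N V : finType) (sg : N -> fsm V) (t : nat) : forall i : N, fstate (sg i) :=
  match t with
  | 0 => fun i => finit (sg i)
  | t'.+1 => fun i =>
      fdelta (states sg t' i) (\bigcup_(j : N) ftau (states sg t' j))
  end.

Definition play (N V : finType) (sg : N -> fsm V) (t : nat) : {set V} :=
  \bigcup_(j : N) ftau (states sg t j).

Definition upd (N V : finType) (sg : N -> fsm V) (i : N) (s : fsm V) : N -> fsm V :=
  fun j => if j == i then s else sg j.

Definition is_profile (N V : finType) (own : V -> N) (sg : N -> fsm V) : Prop :=
  forall j, fsm_for (controlled own j) (sg j).

Definition nash (N V : finType) (own : V -> N) (gam : N -> goal V) (sg : N -> fsm V) : Prop :=
  is_profile own sg /\
  forall (i : N) (s : fsm V), fsm_for (controlled own i) s ->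
    gsat (play (upd sg i s)) (gam i) -> gsat (play sg) (gam i).

Definition has_nash (N V : finType) (own : V -> N) (gam : N -> goal V) : Prop :=
  exists sg, nash own gam sg.

(* two-party game over X u Y: the system (true) controls X, the environment (false) controls Y *)
Definition syn_owner (X Y : finType) (v : (X + Y)%type) : bool :=
  if v is inl _ then true else false.

Definition realizable (X Y : finType) (phi : ldl (X + Y)) : Prop :=
  exists ss : fsm (X + Y)%type, fsm_for (controlled (@syn_owner X Y) true) ss /\
    forall se : fsm (X + Y)%type, fsm_for (controlled (@syn_owner X Y) false) se ->
      gsat (play (fun b : bool => if b then ss else se)) (GEx phi).

Definition gvar (X Y : finType) : finType := ((X + Y) + bool)%type.
Definition pv (X Y : finType) : gvar X Y := inr true.
Definition qv (X Y : finType) : gvar X Y := inr false.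

Definition pl1 : 'I_4 := @Ordinal 4 0 erefl.
Definition pl2 : 'I_4 := @Ordinal 4 1 erefl.
Definition pl3 : 'I_4 := @Ordinal 4 2 erefl.
Definition pl4 : 'I_4 := @Ordinal 4 3 erefl.

Definition gown (X Y : finType) (v : gvar X Y) : 'I_4 :=
  match v with
  | inl (inl _) => pl1
  | inl (inr _) => pl2
  | inr true => pl3
  | inr false => pl4
  end.

Definition piff V (a b : pform V) : pform V :=
  POr (PAnd a b) (PAnd (PNot a) (PNot b)).

Definition ggoal (X Y : finType) (phi : ldl (X + Y)) (i : 'I_4) : goal (gvar X Y) :=
  let phi' := lmap (@inl (X + Y)%type bool) phi in
  let pq := piff (PVar (pv X Y)) (PVar (qv X Y)) in
  match val i with
  | 0 => GEx phi'
  | 1 => GAll (LNot phi')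
  | 2 => GOr (GEx phi') (GFirst pq)
  | _ => GOr (GEx phi') (GFirst (PNot pq))
  end.

(* If the system has a winning strategy, let player 1 play it and the other players idle:
   every play in which player 1 keeps to it satisfies [exists phi], so players 1, 3 and 4
   are satisfied and no deviation of player 2 can achieve [forall ~phi].  Conversely, in a
   Nash equilibrium [exists phi] must hold, since otherwise players 3 and 4 play matching
   pennies on [p <-> q] and one of them could deviate profitably.  If [phi] were not
   realizable, the coalition of players 1, 3 and 4, read as a system strategy over X u Y,
   would be beaten by some environment strategy; player 2 deviating to it would make
   [forall ~phi] true, so by equilibrium it would already hold, a contradiction.  Both
   directions rest on the two-player play being the X u Y projection of the four-player
   play whenever each two-player machine tracks the corresponding player. *)

From Pilot Require Import Defs.
From mathcomp Require Import all_boot.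
From Stdlib Require Import Relations Classical.
Set Implicit Arguments. Unset Strict Implicit. Unset Printing Implicit Defensive.

Scheme ldl_mut_ind := Induction for ldl Sort Prop
with rexp_mut_ind := Induction for rexp Sort Prop.
Combined Scheme ldl_rexp_mut_ind from ldl_mut_ind, rexp_mut_ind.

Lemma clos_refl_trans_mono A (R R' : relation A) :
  (forall x y, R x y -> R' x y) ->
  forall x y, clos_refl_trans A R x y -> clos_refl_trans A R' x y.
Proof.
move=> sub x y; elim=> [a b /sub Hab | a | a b c _ Hab _ Hbc];
  [exact: rt_step | exact: rt_refl | exact: rt_trans Hab Hbc].
Qed.

Section Renaming.
Variables (V W : finType) (f : V -> W).

Lemma peval_pmap (w : {set W}) p : peval w (Defs.pmap f p) = peval (f @^-1: w) p.
Proof. by elim: p => [x|a IH|a IHa b IHb|a IHa b IHb] /=; rewrite ?inE ?IH ?IHa ?IHb. Qed.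

Lemma sat_lmap_reach_rmap :
  (forall g tr i, sat tr (lmap f g) i <-> sat [seq f @^-1: w | w : {set W} <- tr] g i) /\
  (forall r tr i j, reach tr (rmap f r) i j <-> reach [seq f @^-1: w | w : {set W} <- tr] r i j).
Proof.
apply: ldl_rexp_mut_ind => /=.
- move=> x tr i; rewrite size_map.
  by split=> -[lt_i]; rewrite (nth_map set0) // inE.
- by move=> a IH tr i; rewrite IH.
- by move=> a IHa b IHb tr i; rewrite IHa IHb.
- by move=> a IHa b IHb tr i; rewrite IHa IHb.
- by move=> r IHr a IHa tr i; split=> -[j [/IHr Hr /IHa Ha]]; exists j.
- by move=> r IHr a IHa tr i; split=> H j /IHr /H /IHa.
- move=> p tr i j; rewrite size_map.
  by split=> -[-> [lt_i]]; rewrite (nth_map set0) // peval_pmap.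
- by move=> a IH tr i j; rewrite IH.
- by move=> r1 IH1 r2 IH2 tr i j; rewrite IH1 IH2.
- by move=> r1 IH1 r2 IH2 tr i j; split=> -[k [/IH1 H1 /IH2 H2]]; exists k.
- by move=> r IH tr i j; split; apply: clos_refl_trans_mono => a b /IH.
Qed.

Lemma gsat_GEx_lmap (pl : nat -> {set W}) (pl' : nat -> {set V}) g :
  (forall t, pl' t = f @^-1: pl t) -> gsat pl (GEx (lmap f g)) <-> gsat pl' (GEx g).
Proof.
move=> pl'E; have prefixE k :
    Defs.prefix pl' k = [seq f @^-1: w | w : {set W} <- Defs.prefix pl k].
  by rewrite /Defs.prefix /mkseq -map_comp; apply: eq_map => t /=.
by split=> -[k Hk]; exists k; move: Hk; rewrite /models prefixE; apply sat_lmap_reach_rmap.1.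
Qed.

End Renaming.

Lemma gsat_GAll_LNot (V : finType) (pl : nat -> {set V}) g :
  gsat pl (GAll (LNot g)) <-> ~ gsat pl (GEx g).
Proof. by split=> [H [k]|H k Hk]; [apply: H | apply: H; exists k]. Qed.

Section Profiles.
Variables (N V : finType) (own : V -> N).

Definition joint (sg : N -> fsm V) (a : forall i, fstate (sg i)) : {set V} :=
  \bigcup_(j : N) ftau (a j).

Definition const_fsm (v : {set V}) : fsm V := @FSM V unit tt (fun _ _ => tt) (fun _ => v).

Lemma const_fsm_for (C v : {set V}) : v \subset C -> fsm_for C (const_fsm v).
Proof. by move=> sub_vC s. Qed.

Lemma upd_profile sg i s :
  is_profile own sg -> fsm_for (controlled own i) s -> is_profile own (upd sg i s).
Proof. by move=> prof s_for j; rewrite /upd; case: eqP => [->|]. Qed.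

Variables (sg : N -> fsm V) (prof : is_profile own sg).

Lemma out_owner j (s : fstate (sg j)) x : x \in ftau s -> own x = j.
Proof. by move/(subsetP (prof s)); rewrite inE => /eqP. Qed.

Lemma out_notin j (s : fstate (sg j)) x : own x != j -> (x \in ftau s) = false.
Proof. by apply: contraNF => /out_owner ->. Qed.

Lemma mem_joint (a : forall i, fstate (sg i)) x : (x \in joint a) = (x \in ftau (a (own x))).
Proof.
by apply/bigcupP/idP => [[j _ x_in]|]; [rewrite (out_owner x_in) | exists (own x)].
Qed.

Lemma mem_play0 x : (x \in play sg 0) = (x \in ftau (finit (sg (own x)))).
Proof. exact: (mem_joint (fun i => finit (sg i))). Qed.

End Profiles.

Section Game.
Variables X Y : finType.
Local Notation G := (gvar X Y).
Local Notation XY := (X + Y)%type.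
Local Notation restr w := (@inl XY bool @^-1: w).
Local Notation embed v := (@inl XY bool @: v).

Lemma mem_embed (v : {set XY}) x : (x \in embed v) = if x is inl u then u \in v else false.
Proof.
case: x => [u|b]; first by rewrite mem_imset // => ? ? [].
by apply/imsetP => -[].
Qed.

Lemma restr_embed (v : {set XY}) : restr (embed v) = v.
Proof. by apply/setP => u; rewrite inE mem_embed. Qed.

Definition lift_fsm (M : fsm XY) : fsm G :=
  @FSM G (fstate M) (finit M) (fun s w => fdelta s (restr w)) (fun s => embed (ftau s)).

(* The X u Y part of a valuation misses p and q; the coalition restores them from the
   outputs of its own copies of players 3 and 4. *)
Definition coalition (m m3 m4 : fsm G) : fsm XY :=
  @FSM XY (fstate m * (fstate m3 * fstate m4))%type (finit m, (finit m3, finit m4))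
    (fun st v => let w := embed v :|: ftau st.2.1 :|: ftau st.2.2 in
       (fdelta st.1 w, (fdelta st.2.1 w, fdelta st.2.2 w)))
    (fun st => restr (ftau st.1)).

Definition side (b : bool) : 'I_4 := if b then pl1 else pl2.

Lemma lift_fsm_for b M : fsm_for (controlled (@syn_owner X Y) b) M ->
  fsm_for (controlled (@gown X Y) (side b)) (lift_fsm M).
Proof.
move=> M_for s; apply/subsetP => x; rewrite mem_embed inE.
by case: x => // u /(subsetP (M_for s)); rewrite inE => /eqP <-; case: u.
Qed.

Definition duel (S E : fsm XY) : bool -> fsm XY := fun b => if b then S else E.

Definition simulates (M : fsm XY) (m : fsm G) :=
  exists R : fstate M -> fstate m -> Prop,
    [/\ R (finit M) (finit m),
        forall s b, R s b -> ftau s = restr (ftau b) &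
        forall s b (w : {set G}), R s b -> R (fdelta s (restr w)) (fdelta b w)].

Definition tracks (sg : 'I_4 -> fsm G) (k : 'I_4) (M : fsm XY) :=
  exists R : fstate M -> (forall i, fstate (sg i)) -> Prop,
    [/\ R (finit M) (fun i => finit (sg i)),
        forall s a, R s a -> ftau s = restr (ftau (a k)) &
        forall s a, R s a -> R (fdelta s (restr (joint a))) (fun i => fdelta (a i) (joint a))].

Lemma simulates_lift M : simulates M (lift_fsm M).
Proof. by exists eq; split=> [|s _ <-|s _ w <-] //=; rewrite restr_embed. Qed.

Lemma tracks_of_simulates sg k M : simulates M (sg k) -> tracks sg k M.
Proof.
case=> R [R0 Rout Rstep]; exists (fun s a => R s (a k)).
by split=> // [s a /Rout | s a /Rstep].
Qed.

Section Profile.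
Variables (sg : 'I_4 -> fsm G) (prof : is_profile (@gown X Y) sg).

Lemma coalition_for b : fsm_for (controlled (@syn_owner X Y) b)
  (coalition (sg (side b)) (sg pl3) (sg pl4)).
Proof.
case: b => st; apply/subsetP => -[x|y]; rewrite !inE => /(out_owner prof) //.
all: by move/(congr1 val).
Qed.

Lemma mem_out (a : forall i, fstate (sg i)) j x :
  (x \in ftau (a j)) = (gown x == j) && (x \in joint a).
Proof.
rewrite (mem_joint prof); case: eqP => [<- // | /eqP ne].
exact: out_notin.
Qed.

Lemma restr_joint (a : forall i, fstate (sg i)) :
  restr (ftau (a pl1)) :|: restr (ftau (a pl2)) = restr (joint a).
Proof. by apply/setP => -[x|y]; rewrite !inE !mem_out ?orbF. Qed.

Lemma joint_of_restr (a : forall i, fstate (sg i)) :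
  embed (restr (joint a)) :|: ftau (a pl3) :|: ftau (a pl4) = joint a.
Proof.
apply/setP => x; rewrite !inE mem_embed !mem_out.
by case: x => [[u|u]|[]]; rewrite ?inE ?orbF.
Qed.

Lemma tracks_coalition k : tracks sg k (coalition (sg k) (sg pl3) (sg pl4)).
Proof.
exists (fun s a => s = (a k, (a pl3, a pl4))); split=> // s a -> //=.
by rewrite joint_of_restr.
Qed.

Lemma play_duel S E : tracks sg pl1 S -> tracks sg pl2 E ->
  forall t, play (duel S E) t = restr (play sg t).
Proof.
move=> [RS [RS0 RSout RSstep]] [RE [RE0 REout REstep]].
pose related t := RS (states (duel S E) t true) (states sg t) /\
                  RE (states (duel S E) t false) (states sg t).
have playE t : related t -> play (duel S E) t = restr (play sg t).
  by case=> HS HE; rewrite /play big_bool /= (RSout _ _ HS) (REout _ _ HE) restr_joint.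
have rel t : related t.
  elim: t => [|t IH] //; have := playE t IH; rewrite /related /play /= => ->.
  by case: IH => HS HE; split; [exact: RSstep | exact: REstep].
by move=> t; apply/playE/rel.
Qed.

End Profile.
End Game.

Section Goals.
Variables (X Y : finType) (phi : ldl (X + Y)%type).
Local Notation G := (gvar X Y).
Local Notation XY := (X + Y)%type.
Local Notation phi' := (lmap (@inl XY bool) phi).

Definition winning (S : fsm XY) : Prop :=
  forall E, fsm_for (controlled (@syn_owner X Y) false) E -> gsat (play (duel S E)) (GEx phi).

Lemma ggoal_of_exists pl i : i != pl2 -> gsat pl (GEx phi') -> gsat pl (ggoal phi i).
Proof. by case: i => -[|[|[|[|n]]]] //= _ _ ?; left. Qed.

Lemma not_winning_beaten S : ~ winning S ->
  exists2 E, fsm_for (controlled (@syn_owner X Y) false) E & ~ gsat (play (duel S E)) (GEx phi).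
Proof.
move=> S_loses; apply: NNPP => no_E; apply: S_loses => E E_for.
by apply: NNPP => phi_fails; apply: no_E; exists E.
Qed.

Definition same_pq : pform G := piff (PVar (pv X Y)) (PVar (qv X Y)).

Section Profile.
Variables (sg : 'I_4 -> fsm G) (prof : is_profile (@gown X Y) sg).

Lemma exists_phi_duel S E : tracks sg pl1 S -> tracks sg pl2 E ->
  gsat (play (duel S E)) (GEx phi) <-> gsat (play sg) (GEx phi').
Proof. by move=> HS HE; symmetry; apply: gsat_GEx_lmap; apply: play_duel. Qed.

Lemma winning_exists_phi S : winning S -> simulates S (sg pl1) -> gsat (play sg) (GEx phi').
Proof.
move=> S_win S_sim.
apply/(exists_phi_duel (tracks_of_simulates S_sim) (tracks_coalition prof pl2)).
by apply: S_win; apply: (coalition_for prof (b := false)).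
Qed.

Lemma match_deviation :
  exists2 s, fsm_for (controlled (@gown X Y) pl3) s & peval (play (upd sg pl3 s) 0) same_pq.
Proof.
pose v := if qv X Y \in ftau (finit (sg pl4)) then [set pv X Y] else set0.
have s_for : fsm_for (controlled (@gown X Y) pl3) (const_fsm v).
  by apply: const_fsm_for; rewrite /v; case: ifP; rewrite ?sub1set ?inE ?sub0set.
exists (const_fsm v) => //.
by rewrite /= !(mem_play0 (upd_profile prof s_for)) /= /v; case: ifP; rewrite ?inE.
Qed.

Lemma mismatch_deviation :
  exists2 s, fsm_for (controlled (@gown X Y) pl4) s & ~~ peval (play (upd sg pl4 s) 0) same_pq.
Proof.
pose v := if pv X Y \in ftau (finit (sg pl3)) then set0 else [set qv X Y].
have s_for : fsm_for (controlled (@gown X Y) pl4) (const_fsm v).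
  by apply: const_fsm_for; rewrite /v; case: ifP; rewrite ?sub1set ?inE ?sub0set.
exists (const_fsm v) => //.
by rewrite /= !(mem_play0 (upd_profile prof s_for)) /= /v; case: ifP; rewrite ?inE.
Qed.

End Profile.

Lemma nash_exists_phi sg : nash (@gown X Y) (ggoal phi) sg -> gsat (play sg) (GEx phi').
Proof.
move=> [prof dev]; apply: NNPP => no_phi.
have [s3 s3_for match3] := match_deviation prof.
have [s4 s4_for mismatch4] := mismatch_deviation prof.
have [//|pq0] : gsat (play sg) (ggoal phi pl3) by apply: (dev pl3 s3 s3_for); right.
have [//|npq0] : gsat (play sg) (ggoal phi pl4) by apply: (dev pl4 s4 s4_for); right.
by case/negP: npq0.
Qed.

Lemma realizable_nash : realizable phi -> has_nash (@gown X Y) (ggoal phi).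
Proof.
move=> [S [S_for S_win]].
pose sg := upd (fun=> const_fsm set0) pl1 (lift_fsm S).
have prof : is_profile (@gown X Y) sg.
  by apply: upd_profile (lift_fsm_for S_for) => j; apply/const_fsm_for/sub0set.
exists sg; split=> // i s; have [-> s_for|ne2 _ _] := eqVneq i pl2.
  move/gsat_GAll_LNot; case.
  exact (winning_exists_phi (upd_profile prof s_for) S_win (simulates_lift S)).
by apply: ggoal_of_exists ne2 (winning_exists_phi prof S_win (simulates_lift S)).
Qed.

Lemma nash_realizable : has_nash (@gown X Y) (ggoal phi) -> realizable phi.
Proof.
move=> [sg nash_sg]; have phi_sg := nash_exists_phi nash_sg; case: nash_sg => prof dev.
apply: NNPP => not_real.
pose S := coalition (sg pl1) (sg pl3) (sg pl4).
have S_loses : ~ winning S.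
  by move=> S_win; apply: not_real; exists S; split=> //; apply: (coalition_for prof (b := true)).
have [E E_for E_wins] := not_winning_beaten S_loses.
pose sg' := upd sg pl2 (lift_fsm E).
have prof' : is_profile (@gown X Y) sg' := upd_profile prof (lift_fsm_for E_for).
have E_tracks : tracks sg' pl2 E by apply: tracks_of_simulates; apply: simulates_lift.
have : gsat (play sg') (ggoal phi pl2).
  by apply/gsat_GAll_LNot; rewrite -(exists_phi_duel prof' (tracks_coalition prof' pl1) E_tracks).
by move/(dev pl2 _ (lift_fsm_for E_for))/gsat_GAll_LNot.
Qed.

End Goals.

Theorem lemma2 (X Y : finType) (phi : ldl (X + Y)%type) :
  realizable phi <-> has_nash (@gown X Y) (ggoal phi).
Proof. by split; [apply: realizable_nash | apply: nash_realizable]. Qed.
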